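(* For every base $\mathscr{B}$, finite multisets of atoms $P=[p_1,\dots,p_n]$ and $S$, and atom $q$, the following are equivalent: (1) $P,S\vdash_{\mathscr{B}}q$; (2) for every base $\mathscr{X}\supseteq\mathscr{B}$ and all finite multisets of atoms $T_1,\dots,T_n$, if $T_i\vdash_{\mathscr{X}}p_i$ for all $i=1,\dots,n$, then $T_1,\dots,T_n,S\vdash_{\mathscr{X}}q$.
   Context: Fix a countably infinite set $\mathbb{A}$ of atoms; multisets are finite and ''$,$'' denotes multiset union. An atomic rule is $(P_1\triangleright p_1,\dots,P_n\triangleright p_n)\Rightarrow p$ ($n\ge0$) with $P_i$ finite multisets of atoms and $p_i,p$ atoms; a base is a set of atomic rules, and $\mathscr{X}\supseteq\mathscr{B}$ means $\mathscr{X}$ contains all rules of $\mathscr{B}$. Derivability $\vdash_{\mathscr{B}}$ is the least relation between finite multisets of atoms and atoms such that (Ref) $[p]\vdash_{\mathscr{B}}p$; (App) if $(P_1\triangleright p_1,\dots,P_n\triangleright p_n)\Rightarrow p\in\mathscr{B}$ and $S_i,P_i\vdash_{\mathscr{B}}p_i$ for $i=1,\dots,n$, then $S_1,\dots,S_n\vdash_{\mathscr{B}}p$. *)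

From mathcomp Require Import all_boot finmap multiset.
Set Implicit Arguments. Unset Strict Implicit. Unset Printing Implicit Defensive.
Local Open Scope fset_scope.
Local Open Scope mset_scope.

Definition atom := nat.
Definition mctx := {mset atom}.

(* An atomic rule (P_1 |> p_1, ..., P_n |> p_n) => p :
   a list of premises (P_i, p_i) and a conclusion p. *)
Definition rule := (seq (mctx * atom) * atom)%type.

Definition base := rule -> Prop.

Definition base_ext (X B : base) : Prop := forall r, B r -> X r.

Definition msum (Ss : seq mctx) : mctx := foldr (fun A B => A `+` B) mset0 Ss.

Inductive derivable (B : base) : mctx -> atom -> Prop :=
| der_ref (p : atom) : derivable B [mset p] p
| der_app (prems : seq (mctx * atom)) (p : atom) (Ss : seq mctx) :
    B (prems, p) ->
    size Ss = size prems ->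
    (forall i, i < size prems ->
       derivable B (nth mset0 Ss i `+` (nth (mset0, 0) prems i).1)
                   (nth (mset0, 0) prems i).2) ->
    derivable B (msum Ss) p.

From mathcomp Require Import all_boot finmap multiset.
Set Implicit Arguments. Unset Strict Implicit.
Local Open Scope fset_scope.
Local Open Scope mset_scope.

(* Both directions rest on two structural properties of |-:
   - monotonicity: a derivation in B is a derivation in any X extending B
     (a rule of B is a rule of X);
   - cut admissibility: from p,G |-_X q and T |-_X p we get G,T |-_X q,
     proved by induction on the first derivation, the cut atom p being
     pushed into the premise S_j of the rule application that contains it.
   Iterating cut over the atoms of P (multicut) gives (1) => (2).
   For (2) => (1) take X := B and T_i := [p_i], derived by (Ref); the union
   of these singletons is P itself. *)

Lemma seq_mset_nil : seq_mset [::] = mset0 :> mctx.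
Proof. by rewrite -enum_mset0 seq_mset_id. Qed.

Lemma mem_msum (Ss : seq mctx) (a : atom) :
  a \in msum Ss -> exists2 j, j < size Ss & a \in nth mset0 Ss j.
Proof.
elim: Ss => [|A Ss IH] /=; first by rewrite in_mset0.
case/msetDP => [aA | /IH [j lt_j aSj]]; first by exists 0.
by exists j.+1.
Qed.

Lemma msum_set_nth (Ss : seq mctx) (j : nat) (A : mctx) : j < size Ss ->
  msum (set_nth mset0 Ss j A) `+` nth mset0 Ss j = msum Ss `+` A.
Proof.
elim: Ss j => [|C Ss IH] [|j] //= lt_j.
  by rewrite [LHS]msetDC msetDA msetDAC.
by rewrite -msetDA IH // msetDA.
Qed.

Lemma msum_singletons (P : seq atom) :
  msum [seq [mset p] | p <- P] = seq_mset P.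
Proof.
elim: P => [|p P IH] /=; first by rewrite seq_mset_nil.
by rewrite IH mset_cons.
Qed.

Lemma derivable_mono (B X : base) (G : mctx) (q : atom) :
  base_ext X B -> derivable B G q -> derivable X G q.
Proof.
move=> XB; elim=> [p|prems p Ss Brule size_Ss _ IH]; first exact: der_ref.
by apply: der_app (XB _ Brule) size_Ss _ => i lt_i; apply: IH.
Qed.

Lemma ref_context (p q : atom) (G : mctx) :
  p +` G = [mset q] -> p = q /\ G = mset0.
Proof.
move=> E; have /mset1P p_q : p \in [mset q] by rewrite -E mset1D1.
by split=> //; rewrite -(msetD1K p G) E p_q msetBxx.
Qed.

Lemma derivable_cut (X : base) (p q : atom) (G T : mctx) :
  derivable X (p +` G) q -> derivable X T p -> derivable X (G `+` T) q.
Proof.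
move=> D DT; move E: (p +` G) D => Delta D; elim: D G E.
  move=> q' G /ref_context [<- ->]; by rewrite mset0D.
move=> prems q' Ss Xrule size_Ss Dprem IH G E.
have [j lt_j pSj] : exists2 j, j < size Ss & p \in nth mset0 Ss j.
  by apply: mem_msum; rewrite -E mset1D1.
set R := nth mset0 Ss j `\ p.
have Sj_eq : nth mset0 Ss j = p +` R by rewrite msetB1K.
(* the cut happens inside the j-th context, which becomes R,T *)
have -> : G `+` T = msum (set_nth mset0 Ss j (R `+` T)).
  apply: (can_inj (msetDKBC (nth mset0 Ss j))).
  rewrite msum_set_nth // -E Sj_eq.
  by rewrite msetDACA [G `+` _]msetDC [T `+` _]msetDC.
apply: der_app Xrule _ _; first by rewrite size_set_nth (maxn_idPr lt_j).
move=> i lt_i; rewrite nth_set_nth /=; case: eqP => [->|_]; last exact: Dprem.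
rewrite msetDAC; apply: IH; first by rewrite -size_Ss.
by rewrite Sj_eq msetDA.
Qed.

(* Multicut: all atoms of P can be replaced simultaneously by derivations;
   by induction on P, cutting the first atom p_1 moves T_1 into the side
   context S. *)
Lemma derivable_multicut (X : base) (P : seq atom) (S : mctx) (q : atom)
    (Ts : seq mctx) :
  derivable X (seq_mset P `+` S) q ->
  size Ts = size P ->
  (forall i, i < size P -> derivable X (nth mset0 Ts i) (nth 0 P i)) ->
  derivable X (msum Ts `+` S) q.
Proof.
elim: P S Ts => [|p P IH] S [|T Ts] //=.
  by rewrite seq_mset_nil.
move=> D [size_Ts] DTs.
have D' : derivable X (seq_mset P `+` (S `+` T)) q.
  rewrite msetDA; apply: derivable_cut (DTs 0 isT).
  by rewrite msetDA -mset_cons.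
rewrite -msetDA msetDC -msetDA.
by apply: IH D' size_Ts _ => i; apply: DTs i.+1.
Qed.

Theorem proposition2 (B : base) (P : seq atom) (S : mctx) (q : atom) :
  derivable B (seq_mset P `+` S) q <->
  (forall (X : base), base_ext X B ->
     forall (Ts : seq mctx), size Ts = size P ->
       (forall i, i < size P -> derivable X (nth mset0 Ts i) (nth 0 P i)) ->
       derivable X (msum Ts `+` S) q).
Proof.
split=> [D X XB Ts size_Ts DTs | H].
  exact: derivable_multicut (derivable_mono XB D) size_Ts DTs.
(* instantiate X := B and T_i := [p_i], each derived by (Ref) *)
rewrite -msum_singletons; apply: H => [r Br //||i lt_i]; first by rewrite size_map.
by rewrite (nth_map 0) //; apply: der_ref.
Qed.
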